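(* Let $G$ be a finite triangle-free graph of order $n$. (i) If $\delta(G)\geq 1$, then $\beta_{s}(G)\leq n+6-2\sqrt{9+2n}$. (ii) If $\delta(G)\geq 2$, then $\beta_{D}(G)\leq n+4-2\sqrt{4+2n}$. Furthermore, the inequality in (i) holds with equality if and only if $G\in\Lambda$, and the inequality in (ii) holds with equality if and only if $G\in\Omega$.
   Context: All graphs are finite and simple. For a vertex $v$, $N(v)$ is its open neighborhood and $N[v]=N(v)\cup\{v\}$; $\delta(G)$ and $\Delta(G)$ denote minimum and maximum degree, and $G[S]$ is the subgraph induced by $S$. For $f:V(G)\to\mathbb{R}$ and $S\subseteq V(G)$, $f(S)=\sum_{v\in S}f(v)$. A signed bad function (SBF) of $G$ is a function $f:V(G)\to\{-1,1\}$ with $f(N[v])\leq 1$ for every $v\in V(G)$; the signed bad number is $\beta_s(G)=\max\{f(V(G)) : f \text{ is an SBF of } G\}$. A bad function (BF) of $G$ is a function $f:V(G)\to\{-1,1\}$ with $f(N(v))\leq 1$ for every $v\in V(G)$; the negative decision number is $\beta_D(G)=\max\{f(V(G)) : f \text{ is a BF of } G\}$. The corona $G_1\circ G_2$ is the graph formed from one copy of $G_1$ and $|V(G_1)|$ copies of $G_2$, where the $i$th vertex of $G_1$ is joined to every vertex of the $i$th copy of $G_2$. $\overline{K_m}$ denotes the edgeless graph on $m$ vertices. $\Lambda$ is the family of all graphs $G$ obtained, for some positive integer $p$, from $K_{p,p}\circ\overline{K_{p+2}}$ by adding some new edges (possibly none) whose endpoints both lie in the copies of $\overline{K_{p+2}}$,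 such that the resulting graph is triangle-free and $\Delta(G[V(G)\setminus V(K_{p,p})])\leq 1$. $\Omega$ is the family of all graphs $G$ obtained, for some positive integer $p$, from $K_{p,p}\circ\overline{K_{p+1}}$ by adding some new edges (possibly none) whose endpoints both lie in the copies of $\overline{K_{p+1}}$, such that the resulting graph is triangle-free and $\Delta(G[V(G)\setminus V(K_{p,p})])\leq 2$. *)

From HB Require Import structures.
From mathcomp Require Import all_boot all_order all_algebra.
Set Implicit Arguments. Unset Strict Implicit. Unset Printing Implicit Defensive.
Import Order.TTheory GRing.Theory Num.Theory.
Local Open Scope ring_scope.

Definition simple_graph (T : finType) (e : rel T) : Prop :=
  symmetric e /\ irreflexive e.

Definition triangle_free (T : finType) (e : rel T) : Prop :=
  forall x y z : T, e x y -> e y z -> e x z -> False.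

Definition opnbhd (T : finType) (e : rel T) (v : T) : {set T} := [set u | e v u].
Definition clnbhd (T : finType) (e : rel T) (v : T) : {set T} := v |: opnbhd e v.

Definition min_deg_ge (T : finType) (e : rel T) (k : nat) : Prop :=
  forall v : T, (k <= #|opnbhd e v|)%N.

(* A function V -> {-1,1} is encoded by g : {ffun T -> bool}:
   g v = true means value 1, g v = false means value -1. *)
Definition sgnb (b : bool) : int := if b then 1 else -1.
Definition fval (T : finType) (g : {ffun T -> bool}) (S : {set T}) : int :=
  \sum_(u in S) sgnb (g u).

Definition is_SBF (T : finType) (e : rel T) (g : {ffun T -> bool}) : bool :=
  [forall v, fval g (clnbhd e v) <= 1].
Definition is_BF (T : finType) (e : rel T) (g : {ffun T -> bool}) : bool :=
  [forall v, fval g (opnbhd e v) <= 1].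

(* Maxima of f(V(G)); the seed -#|T| is a lower bound of every f(V(G)),
   so it does not affect the maximum (and is attained by f = -1). *)
Definition beta_s (T : finType) (e : rel T) : int :=
  \big[Num.max/ - (#|T|%:Z)]_(g : {ffun T -> bool} | is_SBF e g) fval g setT.
Definition beta_D (T : finType) (e : rel T) : int :=
  \big[Num.max/ - (#|T|%:Z)]_(g : {ffun T -> bool} | is_BF e g) fval g setT.

(* Vertex set of K_{p,p} o \bar{K_m}:
   inl (s,i) : vertex i of side s of K_{p,p};
   inr ((s,i),j) : j-th vertex of the copy of \bar{K_m} attached to (s,i). *)
Definition base_vx (p : nat) : finType := ('I_2 * 'I_p)%type.
Definition corona_vx (p m : nat) : finType :=
  (base_vx p + (base_vx p * 'I_m))%type.

Definition is_leaf (p m : nat) (x : corona_vx p m) : bool :=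
  if x is inr _ then true else false.

(* Edges prescribed by K_{p,p} o \bar{K_m} for pairs not both in the copies;
   pairs of copy vertices are unconstrained (the "added edges"). *)
Definition corona_compat (p m : nat) (x y : corona_vx p m) (b : bool) : Prop :=
  match x, y with
  | inl a, inl a' => b = (a.1 != a'.1)
  | inl a, inr (a', _) => b = (a == a')
  | inr (a, _), inl a' => b = (a == a')
  | inr _, inr _ => True
  end.

(* G is (isomorphic to) a graph obtained from K_{p,p} o \bar{K_(p+k)}, p >= 1,
   by adding edges between copy vertices, triangle-free, and with
   Delta(G[V \ V(K_{p,p})]) <= d. *)
Definition corona_family (k d : nat) (T : finType) (e : rel T) : Prop :=
  exists p : nat, (0 < p)%N /\
  exists f : T -> corona_vx p (p + k),
    [/\ bijective f,
        (forall x y : T, corona_compat (f x) (f y) (e x y)),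
        triangle_free e &
        (forall x : T, is_leaf (f x) ->
           (#|[set y | e x y && is_leaf (f y)]| <= d)%N)].

Definition in_Lambda (T : finType) (e : rel T) : Prop := corona_family 2 1 e.
Definition in_Omega (T : finType) (e : rel T) : Prop := corona_family 1 2 e.

(* Let M be the set where the sign function f is -1 and m = |M|, so that
   f(V) = n - 2m.  For c = 2 (signed bad functions, delta >= 1) and c = 1 (bad
   functions, delta >= 2) the local conditions say that every vertex outside M
   has a neighbour in M, and every vertex of M has at most c more neighbours
   outside M than inside.  Counting the edges between M and its complement and
   bounding the edges inside M by Mantel's theorem gives
     n - m <= e(M, V \ M) <= 2 e(M) + c m <= m^2 / 2 + c m,
   i.e. m >= sqrt((c+1)^2 + 2n) - (c+1), which is the bound.  In the equality
   case G[M] = K_{q,q}, every vertex outside M has exactly one neighbour in M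
   and every vertex of M exactly q + c neighbours outside M, so G is
   K_{q,q} o \bar K_{q+c} plus edges among the leaves.  Conversely, on such a
   graph f = -1 exactly on K_{q,q} attains the bound. *)

From HB Require Import structures.
From mathcomp Require Import all_boot all_order all_algebra.
From mathcomp Require Import zify ring lra.
Import Order.TTheory GRing.Theory Num.Theory.

Set Implicit Arguments. Unset Strict Implicit. Unset Printing Implicit Defensive.

Section Degrees.
Variables (T : finType) (e : rel T).
Implicit Types (X Y : {set T}) (v : T).

Definition deg_in (X : {set T}) (v : T) : nat := #|[set u in X | e v u]|.

Lemma deg_inE X v : deg_in X v = \sum_(u in X) e v u.
Proof.
rewrite /deg_in -sum1_card (eq_bigl (fun u => (u \in X) && e v u)); last first.
  by move=> u; rewrite !inE.
by rewrite big_mkcondr /=; apply: eq_bigr => u _; case: (e v u).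
Qed.

Lemma sum_deg_in_sym X Y : symmetric e ->
  \sum_(v in X) deg_in Y v = \sum_(u in Y) deg_in X u.
Proof.
move=> se; under eq_bigr do rewrite deg_inE.
rewrite exchange_big; apply: eq_bigr => u _; rewrite deg_inE.
by apply: eq_bigr => v _; rewrite se.
Qed.

Lemma deg_in_subset X Y v : X \subset Y -> deg_in X v <= deg_in Y v.
Proof.
move=> XY; apply/subset_leq_card/subsetP => u; rewrite !inE.
by case/andP=> /(subsetP XY) -> ->.
Qed.

Lemma card_opnbhd_split X v : #|opnbhd e v| = deg_in X v + deg_in (~: X) v.
Proof.
rewrite -(cardsID X (opnbhd e v)) /deg_in.
by congr (_ + _); apply: eq_card => u; rewrite !inE andbC.
Qed.

Lemma deg_in_full X v : deg_in X v = #|X| -> {in X, forall u, e v u}.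
Proof.
move=> dX u uX; have /(subset_cardP dX) eqX : [set u in X | e v u] \subset X.
  by apply/subsetP => w; rewrite inE => /andP[].
by move: uX; rewrite -eqX inE => /andP[].
Qed.

Lemma deg_in_eq_subset X Y v : X \subset Y -> deg_in X v = deg_in Y v ->
  {in Y, forall u, e v u -> u \in X}.
Proof.
move=> XY dXY u uY vu.
have /(subset_cardP dXY) eqXY : [set u in X | e v u] \subset [set u in Y | e v u].
  by apply/subsetP => w; rewrite !inE => /andP[/(subsetP XY) -> ->].
by have := eqXY u; rewrite !inE uY vu andbT => ->.
Qed.

End Degrees.

Section SignFunctions.
Variables (T : finType) (g : {ffun T -> bool}).
Local Open Scope ring_scope.

Definition pos_set : {set T} := [set u | g u].

Lemma fvalE S : fval g S = #|S :&: pos_set|%:Z - #|S :\: pos_set|%:Z.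
Proof.
rewrite /fval (bigID g) /=.
rewrite (eq_bigr (fun _ => 1)) => [|u /andP[_ ->]] //.
rewrite [X in _ + X](eq_bigr (fun _ => -1)) => [|u /andP[_ /negbTE ->]] //.
rewrite !sumr_const mulNrn !natz; congr (_%:Z - _%:Z); apply: eq_card => u.
  by rewrite !inE.
by rewrite !inE andbC.
Qed.

Lemma fval_setT : fval g setT = #|pos_set|%:Z - #|~: pos_set|%:Z.
Proof. by rewrite fvalE setTI setTD. Qed.

Lemma fval_opnbhd (e : rel T) v :
  fval g (opnbhd e v) = (deg_in e pos_set v)%:Z - (deg_in e (~: pos_set) v)%:Z.
Proof.
rewrite fvalE /deg_in; congr (Posz _ - Posz _).
  by apply: eq_card => u; rewrite !inE andbC.
by apply: eq_card => u; rewrite !inE andbC.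
Qed.

Lemma fval_clnbhd (e : rel T) v : irreflexive e ->
  fval g (clnbhd e v) = sgnb (g v) + fval g (opnbhd e v).
Proof. by move=> ie; rewrite /fval /clnbhd big_setU1 //= inE ie. Qed.

End SignFunctions.

Section Mantel.
Variables (T : finType) (e : rel T) (M : {set T}).
Hypotheses (se : symmetric e) (tf : triangle_free e).

Section Star.
Variable x : T.
Hypotheses (xM : x \in M) (xmax : {in M, forall y, deg_in e M y <= deg_in e M x}).

Let A := [set u in M | e x u].
Let B := M :\: A.

Let AM : A \subset M.
Proof. by apply/subsetP => u; rewrite inE => /andP[]. Qed.

Let A_indep y z : y \in A -> z \in A -> e y z = false.
Proof. by rewrite !inE => /andP[_ xy] /andP[_ xz]; apply/negP => /(tf xy)/(_ xz). Qed.

Let sum_deg_star :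
  \sum_(u in M) deg_in e M u = \sum_(w in B) deg_in e A w + \sum_(w in B) deg_in e M w.
Proof.
rewrite (big_setID A) /= (setIidPr AM); congr (_ + _).
rewrite [RHS](sum_deg_in_sym _ _ se); apply: eq_bigr => u uA; apply: eq_card => w.
case: (boolP (w \in A)) => wA; first by rewrite !inE A_indep ?andbF.
by rewrite !inE in wA *; rewrite wA.
Qed.

(* Every edge inside M meets B, the rest of M outside the neighbourhood A of a
   vertex of maximum degree; hence e(M) <= |A| |B| <= |M|^2 / 4. *)
Lemma mantel_star :
  2 * \sum_(u in M) deg_in e M u <= #|M| ^ 2 /\
  (2 * \sum_(u in M) deg_in e M u = #|M| ^ 2 ->
   #|A| * 2 = #|M| /\ {in M &, forall y z, e y z = ((y \in A) != (z \in A))}).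
Proof.
have BM : B \subset M by apply: subsetDl.
have cardM : #|M| = #|A| + #|B| by rewrite -(cardsID A M) (setIidPr AM).
have le_AM : \sum_(w in B) deg_in e A w <= \sum_(w in B) deg_in e M w
    ?= iff [forall (w | w \in B), deg_in e A w == deg_in e M w].
  by apply: leqif_sum => w _; apply/leqif_eq/deg_in_subset.
have le_MA : \sum_(w in B) deg_in e M w <= \sum_(w in B) #|A|
    ?= iff [forall (w | w \in B), deg_in e M w == #|A|].
  by apply: leqif_sum => w wB; apply/leqif_eq/xmax/(subsetP BM).
rewrite sum_nat_const in le_MA.
have agm := nat_AGM2 #|A| #|B|.
rewrite sum_deg_star cardM; split; first by move: le_AM.1 le_MA.1 agm.1; lia.
move=> eq_sum; have /and3P[] :
    [&& \sum_(w in B) deg_in e A w == \sum_(w in B) deg_in e M w,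
        \sum_(w in B) deg_in e M w == #|B| * #|A|
      & 4 * (#|A| * #|B|) == (#|A| + #|B|) ^ 2].
  by apply/and3P; split; apply/eqP; move: le_AM.1 le_MA.1 agm.1; lia.
rewrite le_AM.2 le_MA.2 agm.2 => /forall_inP eqAM /forall_inP eqMA /eqP eqAB.
have BA w : w \in B -> {in A, forall u, e w u}.
  by move=> wB; apply: deg_in_full; rewrite (eqP (eqAM w wB)) (eqP (eqMA w wB)).
have B_onlyA w : w \in B -> {in M, forall u, e w u -> u \in A}.
  by move=> wB; apply: deg_in_eq_subset => //; apply/eqP/eqAM.
split; first lia.
move=> y z yM zM; have inB u : u \in M -> (u \in B) = (u \notin A).
  by rewrite inE => ->; rewrite andbT.
case: (boolP (y \in A)) => yA; case: (boolP (z \in A)) => zA /=.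
- exact: A_indep.
- by rewrite se BA // inB.
- by rewrite BA // inB.
- have yB : y \in B by rewrite inB.
  by apply/negP => /(B_onlyA y yB z zM); rewrite (negPf zA).
Qed.

End Star.

Lemma mantel :
  2 * \sum_(u in M) deg_in e M u <= #|M| ^ 2 /\
  (2 * \sum_(u in M) deg_in e M u = #|M| ^ 2 ->
   exists2 A : {set T}, A \subset M &
     #|A| * 2 = #|M| /\ {in M &, forall y z, e y z = ((y \in A) != (z \in A))}).
Proof.
have [->|[x0 x0M]] := set_0Vmem M.
  rewrite big_set0 cards0; split => // _; exists set0; rewrite ?sub0set ?cards0 //.
  by split=> // y z; rewrite inE.
case: (@arg_maxnP _ x0 (mem M) (deg_in e M)) => // x xM xmax.
have [le eq] := mantel_star xM xmax; split => // /eq[cardA adj].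
by exists [set u in M | e x u] => //; apply/subsetP => u; rewrite inE => /andP[].
Qed.

End Mantel.

Lemma ord_enum_set (T : finType) (S : {set T}) k :
  #|S| = k -> {w : 'I_k -> T | injective w & forall i, w i \in S}.
Proof. by move=> <-; exists enum_val; [apply: enum_val_inj | apply: enum_valP]. Qed.

Lemma ord2_eq0_neq (s t : 'I_2) : ((s == ord0) != (t == ord0)) = (s != t).
Proof. by case: s => [[|[|s]] Hs]; case: t => [[|[|t]] Ht]. Qed.

Lemma card_corona p m : #|corona_vx p m| = 2 * p + 2 * p * m.
Proof. by rewrite card_sum !card_prod !card_ord. Qed.

Section CoronaRecognition.
Variables (T : finType) (e : rel T) (M A : {set T}) (q c d : nat).
Hypotheses (se : symmetric e) (tf : triangle_free e) (q_gt0 : 0 < q).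
Hypotheses (AM : A \subset M) (cardA : #|A| = q) (cardM : #|M| = q * 2).
Hypothesis adjM : {in M &, forall x y, e x y = ((x \in A) != (y \in A))}.
Hypothesis leaf_core_deg : {in ~: M, forall v, deg_in e M v = 1}.
Hypothesis leaf_leaf_deg : {in ~: M, forall v, deg_in e (~: M) v <= d}.
Hypothesis core_leaf_excess : {in M, forall u, deg_in e (~: M) u = deg_in e M u + c}.
Hypothesis cardT : #|T| = 2 * q + 2 * q * (q + c).

Let core_core_deg u : u \in M -> deg_in e M u = q.
Proof.
move=> uM; have AwM w : w \in A -> w \in M by move/(subsetP AM).
rewrite /deg_in; case: (boolP (u \in A)) => uA.
- rewrite -[RHS](_ : #|M :\: A| = q); last by rewrite cardsD (setIidPr AM); lia.
  apply: eq_card => w; rewrite !inE andbC.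
  by case: (boolP (w \in M)) => wM /=; rewrite ?andbF ?andbT // adjM // uA.
- rewrite -cardA; apply: eq_card => w; rewrite inE.
  case: (boolP (w \in M)) => wM /=; first by rewrite adjM // (negPf uA); case: (w \in A).
  by apply/esym/negP => /AwM; apply/negP.
Qed.

Let core_leaf_deg u : u \in M -> deg_in e (~: M) u = q + c.
Proof. by move=> uM; rewrite core_leaf_excess // core_core_deg. Qed.

Let side (s : 'I_2) : {set T} := if s == ord0 then A else M :\: A.

Let card_side s : #|side s| = q.
Proof. by rewrite /side; case: ifP => // _; rewrite cardsD (setIidPr AM); lia. Qed.

Let core (a : base_vx q) : T := s2val (ord_enum_set (card_side a.1)) a.2.

Let core_side a : core a \in side a.1.
Proof. exact: (s2valP' (ord_enum_set _)). Qed.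

Let core_inM a : core a \in M.
Proof.
by have := core_side a; rewrite /side; case: ifP => _ => [/(subsetP AM)|/setDP[]].
Qed.

Let core_inA a : (core a \in A) = (a.1 == ord0).
Proof.
by have := core_side a; rewrite /side; case: ifP => // _ /setDP[_ /negPf].
Qed.

Let core_adj a b : e (core a) (core b) = (a.1 != b.1).
Proof. by rewrite adjM ?core_inM // !core_inA ord2_eq0_neq. Qed.

Let core_inj : injective core.
Proof.
move=> [s i] [t j] eq_core.
have st : s = t.
  apply/eqP/negPn; rewrite -ord2_eq0_neq.
  by rewrite -(core_inA (s, i)) -(core_inA (t, j)) eq_core eqxx.
by subst t; congr (_, _); apply: (s2valP (ord_enum_set (card_side s))).
Qed.

Let leaf (a : base_vx q) (j : 'I_(q + c)) : T :=
  s2val (ord_enum_set (core_leaf_deg (core_inM a))) j.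

Let leafP a j : leaf a j \notin M /\ e (core a) (leaf a j).
Proof.
by have := s2valP' (ord_enum_set (core_leaf_deg (core_inM a))) j; rewrite !inE => /andP[].
Qed.

Let unique_core_nbr v a b : v \notin M -> e v (core a) -> e v (core b) -> a = b.
Proof.
move=> vM va vb; apply: core_inj.
have /card_le1_eqP : #|[set u in M | e v u]| <= 1.
  by rewrite -/(deg_in e M v) leaf_core_deg ?inE.
by apply; rewrite inE ?core_inM.
Qed.

Let core_leaf_adj a b j : e (core a) (leaf b j) = (a == b).
Proof.
have [vM bv] := leafP b j; apply/idP/eqP => [av|-> //].
by apply: (unique_core_nbr vM); rewrite se.
Qed.

(* Injective because a leaf has a unique neighbour in M, hence bijective by
   counting. *)
Let emb (z : corona_vx q (q + c)) : T :=
  match z with inl a => core a | inr (a, j) => leaf a j end.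

Let emb_leaf z : is_leaf z = (emb z \notin M).
Proof. by case: z => [a|[a j]] /=; [rewrite core_inM | case: (leafP a j)]. Qed.

Let emb_inj : injective emb.
Proof.
move=> z w eq_zw; have := emb_leaf z; rewrite eq_zw -emb_leaf.
case: z w eq_zw => [a|[a j]] [b|[b k]] //= => [/core_inj -> // | eq_ab _].
have [aM ea] := leafP a j; have [_ eb] := leafP b k.
have ab : a = b by apply: (unique_core_nbr aM); rewrite se // eq_ab.
subst b; congr (inr (_, _)).
exact: (s2valP (ord_enum_set (core_leaf_deg (core_inM a)))).
Qed.

Let emb_compat z w : corona_compat z w (e (emb z) (emb w)).
Proof.
case: z w => [a|[a j]] [b|[b k]] /=.
- exact: core_adj.
- exact: core_leaf_adj.
- by rewrite se core_leaf_adj eq_sym.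
- done.
Qed.

Lemma corona_recognition : corona_family c d e.
Proof.
have [f embK fK] : bijective emb.
  by apply: inj_card_bij emb_inj _; rewrite card_corona cardT.
exists q; split => //; exists f; split => //.
- by exists emb.
- by move=> x y; have := emb_compat (f x) (f y); rewrite !fK.
- move=> x; rewrite emb_leaf fK => xM.
  apply: leq_trans (leaf_leaf_deg (_ : x \in ~: M)); last by rewrite inE.
  by apply/subset_leq_card/subsetP => y; rewrite !inE emb_leaf fK andbC.
Qed.

End CoronaRecognition.

(* For c = 2 this is the signed bad function condition and for c = 1 the bad
   function condition (is_SBF_slack, is_BF_slack); the argument is uniform in
   c <= 2. *)
Definition sign_slack (c : nat) (T : finType) (e : rel T) (g : {ffun T -> bool}) : bool :=
  [forall v, deg_in e (pos_set g) v <=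
             deg_in e (~: pos_set g) v + (if g v then 2 - c else c)].

Lemma is_SBF_slack (T : finType) (e : rel T) (g : {ffun T -> bool}) :
  irreflexive e -> is_SBF e g = sign_slack 2 e g.
Proof.
move=> ie; apply: eq_forallb => v; rewrite fval_clnbhd // fval_opnbhd.
by case: (g v) => /=; apply/idP/idP; lia.
Qed.

Lemma is_BF_slack (T : finType) (e : rel T) (g : {ffun T -> bool}) :
  is_BF e g = sign_slack 1 e g.
Proof.
by apply: eq_forallb => v; rewrite fval_opnbhd; case: (g v) => /=; apply/idP/idP; lia.
Qed.

Section SlackCounting.
Variables (T : finType) (e : rel T) (c : nat) (g : {ffun T -> bool}).
Hypotheses (se : symmetric e) (tf : triangle_free e) (c_le2 : c <= 2).
Hypotheses (deg_min : min_deg_ge e (3 - c)) (g_slack : sign_slack c e g).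

Local Notation P := (pos_set g).
Local Notation M := (~: pos_set g).

Let pos_slack v : v \in P -> deg_in e P v <= deg_in e M v + (2 - c).
Proof. by rewrite inE => gv; have /forallP/(_ v) := g_slack; rewrite gv. Qed.

Let neg_slack u : u \in M -> deg_in e P u <= deg_in e M u + c.
Proof. by rewrite !inE => /negPf gu; have /forallP/(_ u) := g_slack; rewrite gu. Qed.

Let pos_neg_nbr v : v \in P -> 1 <= deg_in e M v.
Proof.
move=> vP; have := deg_min v; rewrite (card_opnbhd_split _ P).
by have := pos_slack vP; lia.
Qed.

(* |P| <= e(P, M) = e(M, P) <= 2 e(M) + c |M| <= |M|^2 / 2 + c |M| *)
Lemma slack_count :
  2 * #|T| <= #|M| ^ 2 + 2 * (c + 1) * #|M| /\
  (2 * #|T| = #|M| ^ 2 + 2 * (c + 1) * #|M| ->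
   [/\ {in P, forall v, deg_in e M v = 1},
       {in M, forall u, deg_in e P u = deg_in e M u + c} &
       2 * \sum_(u in M) deg_in e M u = #|M| ^ 2]).
Proof.
have le_P : \sum_(v in P) 1 <= \sum_(v in P) deg_in e M v
    ?= iff [forall (v | v \in P), 1 == deg_in e M v].
  by apply: leqif_sum => v vP; apply/leqif_eq/pos_neg_nbr.
have le_M : \sum_(u in M) deg_in e P u <= \sum_(u in M) (deg_in e M u + c)
    ?= iff [forall (u | u \in M), deg_in e P u == deg_in e M u + c].
  by apply: leqif_sum => u uM; apply/leqif_eq/neg_slack.
rewrite sum1_card in le_P; rewrite big_split sum_nat_const /= in le_M.
have mantel_le := (mantel M se tf).1.
have cardT : #|T| = #|P| + #|M| by rewrite cardsC.
have dbl := sum_deg_in_sym P M se.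
split; first by move: le_P.1 le_M.1; lia.
move=> eq_card; have /and3P[] : [&& #|P| == \sum_(v in P) deg_in e M v,
    \sum_(u in M) deg_in e P u == \sum_(u in M) deg_in e M u + #|M| * c &
    2 * \sum_(u in M) deg_in e M u == #|M| ^ 2].
  by apply/and3P; split; apply/eqP; move: le_P.1 le_M.1; lia.
rewrite le_P.2 le_M.2 => /forall_inP eq_P /forall_inP eq_M /eqP eq_mantel.
by split=> // [v /eq_P | u /eq_M] /eqP.
Qed.

Lemma slack_extremal_corona : 0 < #|T| ->
  2 * #|T| = #|M| ^ 2 + 2 * (c + 1) * #|M| -> corona_family c (3 - c) e.
Proof.
move=> T_gt0 eq_card; have [_ /(_ eq_card) [pos_deg neg_deg eq_mantel]] := slack_count.
have [_ /(_ eq_mantel) [A AM [cardA adjA]]] := mantel M se tf.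
have cardT : #|T| = 2 * #|A| + 2 * #|A| * (#|A| + c).
  by move: eq_card; rewrite -cardA; nia.
apply: (corona_recognition (M := M) (A := A) (q := #|A|)) => //.
- by move: T_gt0; rewrite cardT; nia.
- by move=> v; rewrite setCK => /pos_deg.
- by move=> v; rewrite setCK => vP; have := pos_slack vP; rewrite pos_deg //; lia.
- by move=> u uM; rewrite setCK neg_deg.
Qed.

End SlackCounting.

Section CoronaSign.
Variables (T : finType) (e : rel T) (q c d : nat).
Variables (f : T -> corona_vx q (q + c)) (h : corona_vx q (q + c) -> T).
Hypotheses (fK : cancel f h) (hK : cancel h f).
Hypothesis f_compat : forall x y, corona_compat (f x) (f y) (e x y).
Hypothesis leaf_deg : forall x, is_leaf (f x) -> #|[set y | e x y && is_leaf (f y)]| <= d.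

Let g : {ffun T -> bool} := [ffun x => is_leaf (f x)].
Let M := ~: pos_set g.

Let inME x : (x \in M) = ~~ is_leaf (f x).
Proof. by rewrite !inE ffunE. Qed.

Let ME : M = [set h (inl a) | a : base_vx q].
Proof.
apply/setP => x; rewrite inME; apply/idP/imsetP => [|[a _ ->]]; last by rewrite hK.
by case Efx: (f x) => [a|//] _; exists a; rewrite // -Efx fK.
Qed.

Let card_M : #|M| = 2 * q.
Proof.
rewrite ME card_imset; first by rewrite card_prod !card_ord.
by move=> a b /(can_inj hK) [].
Qed.

Let leaf_core_deg x : is_leaf (f x) -> 1 <= deg_in e M x.
Proof.
case Efx: (f x) => [//|[a j]] _; apply/card_gt0P; exists (h (inl a)).
by have := f_compat x (h (inl a)); rewrite Efx hK inE inME hK /= eqxx => ->.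
Qed.

Let core_core_deg x : ~~ is_leaf (f x) -> q <= deg_in e M x.
Proof.
case Efx: (f x) => [a|//] _; pose o : 'I_2 := if a.1 == ord0 then ord_max else ord0.
have oa : o != a.1 by rewrite /o; case: ifP => [/eqP -> //|/negbT]; rewrite eq_sym.
have inj : injective (fun i : 'I_q => h (inl (o, i))) by move=> i k /(can_inj hK) [].
rewrite -[q in q <= _]card_ord -(card_imset _ inj); apply/subset_leq_card/subsetP.
move=> _ /imsetP[i _ ->]; rewrite inE inME hK /=.
by have := f_compat x (h (inl (o, i))); rewrite Efx hK /= eq_sym oa => ->.
Qed.

Let core_leaf_deg x : ~~ is_leaf (f x) -> deg_in e (~: M) x <= q + c.
Proof.
case Efx: (f x) => [a|//] _; rewrite -[q + c]card_ord.
apply: leq_trans (leq_imset_card (fun j => h (inr (a, j))) _).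
apply/subset_leq_card/subsetP.
move=> y; rewrite !inE ffunE; case Efy: (f y) => [//|[b j]] /= exy.
have := f_compat x y; rewrite Efx Efy exy /= => /esym/eqP ab; subst b.
by apply/imsetP; exists j; rewrite // -Efy fK.
Qed.

Let leaf_leaf_deg x : is_leaf (f x) -> deg_in e (~: M) x <= d.
Proof.
move=> lx; apply: leq_trans (leaf_deg lx); apply/subset_leq_card/subsetP => y.
by rewrite inE in_setC inME negbK inE andbC.
Qed.

Lemma corona_sign_slack : d + c <= 3 -> sign_slack c e g.
Proof.
move=> dc; apply/forallP => x; rewrite -/M -[pos_set g]setCK -/M ffunE.
case: (boolP (is_leaf (f x))) => lx /=.
- by have := leaf_core_deg lx; have := leaf_leaf_deg lx; lia.
- by have := core_core_deg lx; have := core_leaf_deg lx; lia.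
Qed.

Lemma corona_sign_count :
  2 * #|T| = #|~: pos_set g| ^ 2 + 2 * (c + 1) * #|~: pos_set g|.
Proof.
rewrite -/M card_M (bij_eq_card (Bijective fK hK)) card_corona; ring.
Qed.

End CoronaSign.

Lemma corona_extremal_sign (T : finType) (e : rel T) (c : nat) :
  c <= 2 -> corona_family c (3 - c) e ->
  exists2 g : {ffun T -> bool}, sign_slack c e g &
    2 * #|T| = #|~: pos_set g| ^ 2 + 2 * (c + 1) * #|~: pos_set g|.
Proof.
move=> c_le2 [q [_ [f [[h fK hK] compat _ leaf]]]].
exists [ffun x => is_leaf (f x)].
- by apply: (corona_sign_slack fK hK compat leaf); lia.
- exact: (corona_sign_count fK hK).
Qed.

Local Open Scope ring_scope.

Lemma sqrt_bound (R : rcfType) (n m k : nat) :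
  (2 * n <= m ^ 2 + 2 * k * m)%N ->
  let bound : R := n%:R + (2 * k)%:R - 2 * Num.sqrt ((k ^ 2)%:R + 2 * n%:R) in
  n%:R - 2 * m%:R <= bound /\ (n%:R - 2 * m%:R = bound <-> (2 * n = m ^ 2 + 2 * k * m)%N).
Proof.
rewrite -(ler_nat R) => le_nm bound; rewrite /bound.
rewrite !(natrD, natrM, natrX) in le_nm *.
set s := Num.sqrt _.
have s_ge0 : 0 <= s by apply: sqrtr_ge0.
have s2 : s ^+ 2 = k%:R ^+ 2 + 2 * n%:R.
  by apply: sqr_sqrtr; rewrite addr_ge0 ?mulr_ge0 ?exprn_ge0.
have mk_ge0 : 0 <= m%:R + k%:R :> R by rewrite addr_ge0.
have s_le : s <= m%:R + k%:R.
  by rewrite -(ger0_norm mk_ge0) -sqrtr_sqr ler_wsqrtr //; lra.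
split; first lra.
split=> [eq_s|/(congr1 (fun x => x%:R : R))].
- apply/eqP; rewrite -(eqr_nat R) !(natrD, natrM, natrX); apply/eqP.
  have -> : 2 * n%:R = s ^+ 2 - k%:R ^+ 2 by rewrite s2; lra.
  have -> : s = m%:R + k%:R by lra.
  lra.
- rewrite !(natrD, natrM, natrX) => eq_n.
  have -> : s = m%:R + k%:R.
    by rewrite /s (_ : _ + _ = (m%:R + k%:R) ^+ 2) ?sqrtr_sqr ?ger0_norm //; lra.
  lra.
Qed.

Definition max_fval (T : finType) (P : pred {ffun T -> bool}) : int :=
  \big[Num.max/ - #|T|%:Z]_(g | P g) fval g setT.

Lemma max_fval_ge (T : finType) (P : pred {ffun T -> bool}) g :
  P g -> fval g setT <= max_fval P.
Proof. exact: (@le_bigmax_cond _ int _ (- #|T|%:Z) g P (fun g => fval g setT)). Qed.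

Lemma max_fvalP (T : finType) (P : pred {ffun T -> bool}) :
  P [ffun=> false] -> exists2 g, P g & max_fval P = fval g setT.
Proof.
move=> P0.
have [|g Pg max_g] := @eq_bigmax _ int _ (- #|T|%:Z) _ P (fun g => fval g setT) P0.
  by move=> g _; rewrite fval_setT -(cardsC (pos_set g)); lia.
by exists g.
Qed.

Lemma max_fval_slack (R : rcfType) (T : finType) (e : rel T) (c : nat) :
  symmetric e -> triangle_free e -> (0 < #|T|)%N -> (c <= 2)%N ->
  min_deg_ge e (3 - c) ->
  let n : R := #|T|%:R in
  let bound := n + (2 * (c + 1))%:R - 2 * Num.sqrt (((c + 1) ^ 2)%:R + 2 * n) in
  (max_fval (sign_slack c e))%:~R <= bound /\
  ((max_fval (sign_slack c e))%:~R = bound <-> corona_family c (3 - c) e).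
Proof.
move=> se tf T_gt0 c_le2 deg_min n bound.
have fvalR (g : {ffun T -> bool}) : (fval g setT)%:~R = n - 2 * #|~: pos_set g|%:R :> R.
  by rewrite fval_setT /n -(cardsC (pos_set g)) intrB natrD; lra.
have neg_slack : sign_slack c e [ffun=> false].
  by apply/forallP => v; rewrite {1}/deg_in eq_card0 // => u; rewrite !inE ffunE.
have [g0 g0_slack max_g0] := max_fvalP neg_slack.
have [le_g0 eq_g0] := slack_count se tf c_le2 deg_min g0_slack.
have [bound_le bound_eq] := sqrt_bound R le_g0.
rewrite max_g0 fvalR; split=> //; split=> [/bound_eq|].
  exact: slack_extremal_corona.
move=> /(corona_extremal_sign c_le2)[g g_slack eq_g].
have [_ /iffRL/(_ eq_g)] := sqrt_bound R (eq_leq eq_g); rewrite -/n -/bound => eq_bound.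
apply/eqP; rewrite eq_le bound_le /= -eq_bound.
by have := max_fval_ge g_slack; rewrite max_g0 -(ler_int R) !fvalR.
Qed.

Theorem theorem2p2 (R : rcfType) (T : finType) (e : rel T) :
  simple_graph e -> triangle_free e -> (0 < #|T|)%N ->
  let n : R := (#|T|)%:R in
  (min_deg_ge e 1 ->
     ((beta_s e)%:~R <= n + 6 - 2 * Num.sqrt (9 + 2 * n)
      /\ ((beta_s e)%:~R = n + 6 - 2 * Num.sqrt (9 + 2 * n) <-> in_Lambda e)))
  /\
  (min_deg_ge e 2 ->
     ((beta_D e)%:~R <= n + 4 - 2 * Num.sqrt (4 + 2 * n)
      /\ ((beta_D e)%:~R = n + 4 - 2 * Num.sqrt (4 + 2 * n) <-> in_Omega e))).
Proof.
move=> [se ie] tf T_gt0 n.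
have -> : beta_s e = max_fval (sign_slack 2 e).
  by apply: eq_bigl => g; rewrite is_SBF_slack.
have -> : beta_D e = max_fval (sign_slack 1 e).
  by apply: eq_bigl => g; rewrite is_BF_slack.
by split=> deg_min; apply: max_fval_slack.
Qed.
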